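(* Let $q>1$ be a prime number and $0<j\le q$. Then: (1) $\bar{\mathsf{L}}^j_q$ is strongly maximal with respect to $\mathsf{CPL}$, and its consequence relation is the least structural finitary consequence relation extending $\vDash_{\mathsf{L}^j_q}$ that validates the rule $j(\varphi\wedge\neg\varphi)/(\psi\vee\neg\psi)^q$ (for all formulas $\varphi,\psi$); (2) $\mathsf{L}^j_q$ is strongly maximal with respect to $\bar{\mathsf{L}}^j_q$.
   Context: $\mathbf{ŁV}_{n+1}=(\{0,\frac1n,\dots,1\},\neg,\to)$ with $\neg x=1-x$, $x\to y=\min\{1,1-x+y\}$; derived: $x\oplus y=\neg x\to y$, $x\otimes y=\neg(x\to\neg y)$, $x\vee y=(x\to y)\to y$, $x\wedge y=\neg(\neg x\vee\neg y)$; $j\alpha$ is $\alpha\oplus\cdots\oplus\alpha$ ($j$ times) and $\alpha^q$ is $\alpha\otimes\cdots\otimes\alpha$ ($q$ times). $F_{j/q}=\{x:x\ge j/q\}$; $\mathsf{L}^j_q=\langle\mathbf{ŁV}_{q+1},F_{j/q}\rangle$; $\bar{\mathsf{L}}^j_q=\langle\mathbf{ŁV}_{q+1}\times\mathbf{ŁV}_2,F_{j/q}\times\{1\}\rangle$; $\mathsf{CPL}=\langle\mathbf{ŁV}_2,\{1\}\rangle$ over $\{\neg,\to\}$. Matrix consequence: every evaluation sending the premises into the designated set sends the conclusion into it. $L_1$ is strongly maximal w.r.t. $L_2$ if ${\vdash_{L_1}}\subsetneq{\vdash_{L_2}}$ and for every finitary rule $\varphi_1,\dots,\varphi_k/\psi$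 with $\varphi_1,\dots,\varphi_k\vdash_{L_2}\psi$ but $\varphi_1,\dots,\varphi_k\nvdash_{L_1}\psi$, the least consequence relation extending $\vdash_{L_1}$ in which $\sigma(\varphi_1),\dots,\sigma(\varphi_k)\vdash\sigma(\psi)$ for all substitutions $\sigma$ coincides with $\vdash_{L_2}$. *)

From mathcomp Require Import all_boot.
From Stdlib Require Import List.
Set Implicit Arguments. Unset Strict Implicit. Unset Printing Implicit Defensive.

Inductive form : Type :=
| Var : nat -> form
| Neg : form -> form
| Imp : form -> form -> form.

Definition oplus (a b : form) : form := Imp (Neg a) b.
Definition otimes (a b : form) : form := Neg (Imp a (Neg b)).
Definition vee (a b : form) : form := Imp (Imp a b) b.
Definition wedge (a b : form) : form := Neg (vee (Neg a) (Neg b)).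

(* j a = a (+) ... (+) a  (j times, j >= 1; 0 a is the constant 0). *)
Fixpoint nmult (n : nat) (a : form) : form :=
  match n with
  | 0 => Neg (Imp a a)
  | 1 => a
  | S m => oplus a (nmult m a)
  end.

(* a^q = a (x) ... (x) a  (q times, q >= 1; a^0 is the constant 1). *)
Fixpoint npow (n : nat) (a : form) : form :=
  match n with
  | 0 => Imp a a
  | 1 => a
  | S m => otimes a (npow m a)
  end.

Fixpoint subst (s : nat -> form) (f : form) : form :=
  match f with
  | Var n => s n
  | Neg a => Neg (subst s a)
  | Imp a b => Imp (subst s a) (subst s b)
  end.

(* Evaluation in LV_{q+1}: the value k (0 <= k <= q) encodes k/q.
   neg x = 1 - x, x -> y = min(1, 1 - x + y). *)
Fixpoint ev (q : nat) (v : nat -> nat) (f : form) : nat :=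
  match f with
  | Var n => v n
  | Neg a => q - ev q v a
  | Imp a b => minn q (q - ev q v a + ev q v b)
  end.

Definition cons_rel := (form -> Prop) -> form -> Prop.

Definition setOf (l : list form) : form -> Prop := fun x => In x l.

(* L^j_q = < LV_{q+1}, F_{j/q} >: designated values x >= j/q. *)
Definition Lmat (q j : nat) : cons_rel := fun G phi =>
  forall v : nat -> nat, (forall n, v n <= q) ->
    (forall psi, G psi -> j <= ev q v psi) -> j <= ev q v phi.

(* Lbar^j_q = < LV_{q+1} x LV_2, F_{j/q} x {1} >; operations are componentwise,
   so a valuation is a pair (v,w) and the value of a formula is (ev q v, ev 1 w). *)
Definition Lbar (q j : nat) : cons_rel := fun G phi =>
  forall (v w : nat -> nat), (forall n, v n <= q) -> (forall n, w n <= 1) ->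
    (forall psi, G psi -> j <= ev q v psi /\ 1 <= ev 1 w psi) ->
    j <= ev q v phi /\ 1 <= ev 1 w phi.

Definition CPL : cons_rel := Lmat 1 1.

Definition cons_sub (C D : cons_rel) : Prop := forall G phi, C G phi -> D G phi.

Definition is_cons (C : cons_rel) : Prop :=
  (forall G phi, G phi -> C G phi) /\
  (forall G D phi, (forall x, G x -> D x) -> C G phi -> C D phi) /\
  (forall G D phi, (forall x, D x -> C G x) ->
      C (fun x => G x \/ D x) phi -> C G phi).

Definition image (s : nat -> form) (G : form -> Prop) : form -> Prop :=
  fun x => exists y, G y /\ x = subst s y.

Definition structural (C : cons_rel) : Prop :=
  forall s G phi, C G phi -> C (image s G) (subst s phi).

Definition finitary (C : cons_rel) : Prop :=
  forall G phi, C G phi -> exists l : list form, (forall x, In x l -> G x) /\ C (setOf l) phi.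

Definition least_ext (L : cons_rel) (prems : list form) (concl : form) : cons_rel :=
  fun G phi => forall C : cons_rel, is_cons C -> cons_sub L C ->
    (forall s, C (setOf (map (subst s) prems)) (subst s concl)) -> C G phi.

Definition strongly_maximal (L1 L2 : cons_rel) : Prop :=
  (cons_sub L1 L2 /\ ~ cons_sub L2 L1) /\
  forall (prems : list form) (concl : form),
    L2 (setOf prems) concl -> ~ L1 (setOf prems) concl ->
    forall G phi, least_ext L1 prems concl G phi <-> L2 G phi.

Definition validates_rule (q j : nat) (C : cons_rel) : Prop :=
  forall phi psi, C (setOf [:: nmult j (wedge phi (Neg phi))])
                    (npow q (vee psi (Neg psi))).

(* The key device is a formula [nonbool_test q p] taking the value [1/q] where [p] is not
   Boolean and [0] where it is: it runs Euclid's algorithm on [1] and [p], which yields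
   [gcd(q, k)/q = 1/q] when [p] has value [k/q] with [0 < k < q], because [q] is prime.
   Multiples of this atom give substitutions ([encode]) that imitate a prescribed valuation
   where a chosen formula is non-Boolean and a two-valued one where it is Boolean.
   Substituting a countermodel in this way into a rule that holds in CPL (resp. Lbar) but
   fails in Lbar (resp. Lmat) derives [(psi \/ ~psi)^q], which forces [psi] to be Boolean,
   from nothing (resp. from [j(chi /\ ~chi)]); so the extension collapses onto CPL
   (resp. validates the rule).  Conversely, an Lbar-consequence of [G] that is not an
   Lmat-consequence comes, by compactness, from a classically inconsistent finite part of
   [G]; designating that part forces some variable to be non-Boolean, hence designates
   [j(chi /\ ~chi)] for [chi] the disjunction of the [x /\ ~x], and the rule then makes
   every variable Boolean. *)

From Pilot Require Import Defs.
From mathcomp Require Import all_boot zify.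
From Stdlib Require Import List Classical ClassicalEpsilon.
Set Implicit Arguments. Unset Strict Implicit.

Definition bounded q (v : nat -> nat) := forall n, v n <= q.

Lemma ev_le q v f : bounded q v -> ev q v f <= q.
Proof. by move=> hv; elim: f => [n|a _|a _ b _] /=; [exact: hv|lia|lia]. Qed.

Lemma bounded_ev q v s : bounded q v -> bounded q (fun n => ev q v (s n)).
Proof. by move=> hv n; apply: ev_le. Qed.

Lemma bounded_scale q w : bounded 1 w -> bounded q (fun n => q * w n).
Proof. by move=> hw n; have := hw n; nia. Qed.

Lemma ev_subst q v s f : ev q v (subst s f) = ev q (fun n => ev q v (s n)) f.
Proof. by elim: f => [n|a IH|a IHa b IHb] //=; rewrite ?IH ?IHa ?IHb. Qed.

Fixpoint maxvar (f : form) : nat :=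
  match f with
  | Var n => n
  | Neg a => maxvar a
  | Imp a b => maxn (maxvar a) (maxvar b)
  end.

Lemma ev_local q v v' f :
  (forall n, n <= maxvar f -> v n = v' n) -> ev q v f = ev q v' f.
Proof.
elim: f => [n|a IH|a IHa b IHb] /= h; first exact: h.
  by rewrite IH.
by rewrite IHa ?IHb // => n hn; apply: h; lia.
Qed.

Lemma ev_ext q v v' f : v =1 v' -> ev q v f = ev q v' f.
Proof. by move=> h; apply: ev_local => n _. Qed.

Lemma ev_scale q w f : bounded 1 w -> ev q (fun n => q * w n) f = q * ev 1 w f.
Proof.
move=> hw; elim: f => [n|a IH|a IHa b IHb] //=.
  by rewrite IH; have := ev_le a hw; nia.
rewrite IHa IHb; have := ev_le a hw; have := ev_le b hw.
by case: (ev 1 w a) => [|[|x]]; case: (ev 1 w b) => [|[|y]] //= _ _; nia.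
Qed.

Lemma ev_vee q v a b : bounded q v -> ev q v (vee a b) = maxn (ev q v a) (ev q v b).
Proof. by move=> hv /=; have := ev_le a hv; have := ev_le b hv; lia. Qed.

Lemma ev_wedge q v a b : bounded q v -> ev q v (wedge a b) = minn (ev q v a) (ev q v b).
Proof. by move=> hv /=; have := ev_le a hv; have := ev_le b hv; lia. Qed.

Lemma ev_nmult q v n a : bounded q v -> ev q v (nmult n a) = minn q (n * ev q v a).
Proof.
move=> hv; have := ev_le a hv.
by elim: n => [|[|m] IH] /= ha; [lia|lia|move: IH => /= ->; nia].
Qed.

Lemma ev_npow q v n a : bounded q v -> ev q v (npow n.+1 a) = n.+1 * ev q v a - n * q.
Proof.
move=> hv; have := ev_le a hv.
elim: n => [|m IH] ha /=; first lia.
by move: IH; rewrite [npow _ _]/= => ->; case: m => [|m] /=; nia.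
Qed.

Definition bot : form := Neg (Imp (Var 0) (Var 0)).

Lemma ev_bot q v : bounded q v -> ev q v bot = 0.
Proof. by move=> hv /=; lia. Qed.

Definition bigvee (l : list form) : form := fold_right vee bot l.

Lemma bigvee_cons y l : bigvee (y :: l) = vee y (bigvee l).
Proof. by []. Qed.

Lemma bigvee_ge q v l x : bounded q v -> In x l -> ev q v x <= ev q v (bigvee l).
Proof.
move=> hv; elim: l => [//|y l IH] [->|hx]; rewrite bigvee_cons ev_vee //; first lia.
by have := IH hx; lia.
Qed.

Lemma bigvee_le q v l m :
  bounded q v -> (forall x, In x l -> ev q v x <= m) -> ev q v (bigvee l) <= m.
Proof.
move=> hv; elim: l => [|y l IH] h; first by rewrite ev_bot.
rewrite bigvee_cons ev_vee // geq_max h /=; last by left.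
by apply: IH => x hx; apply: h; right.
Qed.

Definition is_bool q x := (x == 0) || (x == q).

Definition to_bool q (v : nat -> nat) n : nat := v n == q.

Lemma bounded_to_bool q v : bounded 1 (to_bool q v).
Proof. by move=> n; rewrite /to_bool; case: eqP. Qed.

Lemma ev_to_bool q v f : (forall n, n <= maxvar f -> is_bool q (v n)) ->
  ev q v f = q * ev 1 (to_bool q v) f.
Proof.
move=> h; rewrite -ev_scale; last exact: bounded_to_bool.
apply: ev_local => n /h; rewrite /to_bool /is_bool.
by case/orP => /eqP ->; case: eqP => //; lia.
Qed.

Definition rule_prem j chi := nmult j (wedge chi (Neg chi)).
Definition rule_concl q psi := npow q (vee psi (Neg psi)).

Lemma rule_prem_designated q j v chi : bounded q v -> 0 < j <= q ->
  (j <= ev q v (rule_prem j chi)) = ~~ is_bool q (ev q v chi).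
Proof.
move=> hv hj; rewrite ev_nmult // ev_wedge //= /is_bool.
have := ev_le chi hv; case: eqP => [->|h0]; case: eqP => [->|hq] hc /=; nia.
Qed.

Lemma ev1_rule_prem j w chi : bounded 1 w -> ev 1 w (rule_prem j chi) = 0.
Proof. by move=> hw; rewrite ev_nmult // ev_wedge //=; have := ev_le chi hw; nia. Qed.

Lemma rule_concl_designated q j v psi : bounded q v -> 0 < j <= q ->
  (j <= ev q v (rule_concl q psi)) = is_bool q (ev q v psi).
Proof.
case: q => [|q] hv hj; first lia.
rewrite ev_npow // ev_vee //= /is_bool.
have := ev_le psi hv; case: eqP => [->|h0]; case: eqP => [->|hq] hc /=; nia.
Qed.

Lemma ev1_rule_concl q w psi : bounded 1 w -> 0 < q -> ev 1 w (rule_concl q psi) = 1.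
Proof.
case: q => [|q] hw hq //; rewrite ev_npow // ev_vee //=.
by have := ev_le psi hw; nia.
Qed.

(* One step of Euclid's algorithm: if [A], [B] take the values [a], [b], then
   [Neg (Imp A (nmult (a %/ b) B))] takes the value [a %% b]. *)
Fixpoint euclid (fuel : nat) (A B : form) (a b : nat) : form :=
  match fuel with
  | 0 => A
  | S f => if b == 0 then A else euclid f B (Neg (Imp A (nmult (a %/ b) B))) b (a %% b)
  end.

Lemma ev_euclid q v fuel A B a b : bounded q v ->
  ev q v A = a -> ev q v B = b -> b < fuel -> ev q v (euclid fuel A B a b) = gcdn a b.
Proof.
move=> hv; elim: fuel A B a b => [//|f IH] A B a b hA hB hf /=.
case: eqP => [b0|b0]; first by rewrite hA b0 gcdn0.
have hmod := ltn_pmod a (d := b); have hdiv : a %/ b * b <= a by rewrite leq_divM.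
rewrite (IH _ _ b (a %% b)) //; first by rewrite gcdnC gcdn_modl.
  rewrite /= ev_nmult // hA hB; have := divn_eq a b; have := ev_le A hv; lia.
lia.
Qed.

Lemma euclid_bool q v fuel A B a b : bounded q v ->
  is_bool q (ev q v A) -> is_bool q (ev q v B) -> is_bool q (ev q v (euclid fuel A B a b)).
Proof.
move=> hv; elim: fuel A B a b => [//|f IH] A B a b hA hB /=.
case: eqP => _ //; apply: IH => //; rewrite /= ev_nmult //.
by move: hA hB; rewrite /is_bool => /orP[] /eqP -> /orP[] /eqP ->; case: (a %/ b); lia.
Qed.

Definition unit_test q y := wedge y (Neg (nmult q.-1 y)).

Lemma ev_unit_test q v y : bounded q v -> 1 < q ->
  ev q v (unit_test q y) = (ev q v y == 1).
Proof.
move=> hv hq; rewrite ev_wedge //= ev_nmult //.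
by have := ev_le y hv; case: (ev q v y) => [|[|z]] _ /=; nia.
Qed.

(* The value of [euclid q.+1 (Imp p p) p q k] is [gcdn q k] whenever [p]
   takes the value [k]; for [q] prime and [0 < k < q] this is the atom [1/q]. *)
Definition nonbool_test q p :=
  bigvee (List.map (fun k => unit_test q (euclid q.+1 (Imp p p) p q k)) (List.seq 1 q.-1)).

Lemma ev_nonbool_test q v p : prime q -> bounded q v ->
  ev q v (nonbool_test q p) = ~~ is_bool q (ev q v p).
Proof.
move=> pq hv; have hq := prime_gt1 pq; have hp := ev_le p hv.
have hImp : ev q v (Imp p p) = q by rewrite /=; lia.
apply/eqP; rewrite eqn_leq; apply/andP; split.
  apply: bigvee_le => // x /in_map_iff [k [<- _]]; rewrite ev_unit_test //.
  case: (boolP (is_bool q _)) => hb /=; last by case: eqP.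
  move: (@euclid_bool q v q.+1 (Imp p p) p q k hv); rewrite hImp /is_bool eqxx orbT.
  by move=> /(_ isT hb) /orP[] /eqP ->; case: eqP => //; lia.
case: (boolP (is_bool q _)) => //= hb.
have hk : 0 < ev q v p < q by move: hb; rewrite /is_bool; case: eqP; case: eqP; lia.
apply: (@leq_trans (ev q v (unit_test q (euclid q.+1 (Imp p p) p q (ev q v p))))).
  rewrite ev_unit_test // (ev_euclid hv hImp (erefl _)); last lia.
  suff /eqP -> : coprime q (ev q v p) by [].
  by rewrite prime_coprime //; apply/negP => /dvdn_leq; lia.
apply: bigvee_ge => //; apply/in_map_iff; exists (ev q v p); split => //.
by apply/in_seq; lia.
Qed.

Lemma ev1_nonbool_test q w p : prime q -> bounded 1 w -> ev 1 w (nonbool_test q p) = 0.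
Proof.
move=> pq hw; have hq := prime_gt1 pq.
have := ev_scale q (nonbool_test q p) hw.
rewrite ev_nonbool_test //; last exact: bounded_scale.
rewrite ev_scale // /is_bool; have := ev_le p hw.
by case: (ev 1 w p) => [|[|]] //= _; rewrite ?muln0 ?muln1 eqxx ?orbT /=; nia.
Qed.

Definition encode q (v w : nat -> nat) psi n : form :=
  if w n == 0 then nmult (v n) (nonbool_test q psi)
  else Neg (nmult (q - v n) (nonbool_test q psi)).

Lemma ev_encode q v w v' psi f : prime q -> bounded q v -> bounded 1 w -> bounded q v' ->
  ev q v' (subst (encode q v w psi) f) =
  if is_bool q (ev q v' psi) then q * ev 1 w f else ev q v f.
Proof.
move=> pq hv hw hv'; rewrite ev_subst.
case: ifP => hb; first rewrite -ev_scale //; apply: ev_ext => n; rewrite /encode.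
all: have := hv n; have := hw n; case: eqP => [->|hw0] /= hwn hvn.
all: by rewrite ev_nmult // ev_nonbool_test // hb /=; nia.
Qed.

Lemma ev1_encode q v w w' psi f : prime q -> bounded 1 w -> bounded 1 w' ->
  ev 1 w' (subst (encode q v w psi) f) = ev 1 w f.
Proof.
move=> pq hw hw'; rewrite ev_subst; apply: ev_ext => n; rewrite /encode.
by have := hw n; case: eqP => [->|hw0] /= hwn; rewrite ev_nmult // ev1_nonbool_test //; lia.
Qed.

Lemma cons_trans C G D phi : is_cons C ->
  (forall x, D x -> C G x) -> C D phi -> C G phi.
Proof.
move=> [_ [hmono hcut]] hD h; apply: (hcut G D) => //.
by apply: (hmono D) => // x hx; right.
Qed.

Lemma cons_rule_instance C L prems concl s G : is_cons C -> cons_sub L C ->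
  (forall s, C (setOf (map (subst s) prems)) (subst s concl)) ->
  (forall x, In x prems -> L G (subst s x)) -> C G (subst s concl).
Proof.
move=> hC hsub hrule hprems; apply: cons_trans hC _ (hrule s).
by move=> y /in_map_iff [x [<- hx]]; apply: hsub; apply: hprems.
Qed.

Lemma Lmat_cons q j : is_cons (Lmat q j).
Proof.
split; [|split].
- by move=> G phi hG v hv h; apply: h.
- by move=> G D phi hGD h v hv hD; apply: h => // x /hGD /hD.
- by move=> G D phi hD h v hv hG; apply: h => // x [/hG|/hD /(_ v hv hG)].
Qed.

Lemma Lbar_cons q j : is_cons (Lbar q j).
Proof.
split; [|split].
- by move=> G phi hG v w hv hw h; apply: h.
- by move=> G D phi hGD h v w hv hw hD; apply: h => // x /hGD /hD.
- by move=> G D phi hD h v w hv hw hG; apply: h => // x [/hG|/hD /(_ v w hv hw hG)].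
Qed.

Lemma Lmat_structural q j : structural (Lmat q j).
Proof.
move=> s G phi h v hv hG; rewrite ev_subst; apply: h; first exact: bounded_ev.
by move=> x hx; rewrite -ev_subst; apply: hG; exists x.
Qed.

Lemma Lbar_structural q j : structural (Lbar q j).
Proof.
move=> s G phi h v w hv hw hG; rewrite !ev_subst; apply: h; try exact: bounded_ev.
by move=> x hx; rewrite -!ev_subst; apply: hG; exists x.
Qed.

Lemma Lmat_sub_Lbar q j : 0 < j <= q -> cons_sub (Lmat q j) (Lbar q j).
Proof.
move=> hj G phi h v w hv hw hG; split; first by apply: h => // x /hG [].
have : j <= ev q (fun n => q * w n) phi.
  apply: h => [|x /hG [_ hx]]; first exact: bounded_scale.
  by rewrite ev_scale //; nia.
by rewrite ev_scale //; nia.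
Qed.

Lemma Lbar_sub_CPL q j : j <= q -> cons_sub (Lbar q j) CPL.
Proof.
move=> hj G phi h v hv hG.
have [] // := h (fun n => q * v n) v (bounded_scale q hv) hv.
by move=> x /hG hx; rewrite ev_scale //; split => //; nia.
Qed.

Lemma Lbar_validates_rule q j : validates_rule q j (Lbar q j).
Proof.
move=> chi psi v w hv hw /(_ _ (or_introl erefl)) [_].
by rewrite ev1_rule_prem.
Qed.

Lemma CPL_not_sub_Lbar q j : 1 < q -> 0 < j <= q -> ~ cons_sub CPL (Lbar q j).
Proof.
move=> hq hj hsub; have hv : bounded q (fun _ => 1) by move=> n; apply: ltnW.
suff : j <= ev q (fun _ => 1) (rule_concl q (Var 0)).
  by rewrite rule_concl_designated // /is_bool /=; case: eqP => //; lia.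
have hcpl : CPL (fun _ => False) (rule_concl q (Var 0)).
  by move=> w hw _; rewrite ev1_rule_concl //; lia.
by apply: (proj1 (hsub _ _ hcpl _ (fun _ => 0) hv (fun _ => leq0n _) _)).
Qed.

Lemma Lbar_not_sub_Lmat q j : 1 < q -> 0 < j <= q -> ~ cons_sub (Lbar q j) (Lmat q j).
Proof.
move=> hq hj hsub; have hv : bounded q (fun _ => 1) by move=> n; apply: ltnW.
suff : j <= ev q (fun _ => 1) (rule_concl q (Var 0)).
  by rewrite rule_concl_designated // /is_bool /=; case: eqP => //; lia.
apply: (hsub _ _ (@Lbar_validates_rule q j (Var 0) (Var 0))) => // x [<-|[]].
by rewrite rule_prem_designated // /is_bool /=; case: eqP => //; lia.
Qed.

(* Koenig's lemma for the finitely branching tree of valuations with values at most [q]. *)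
Section Compactness.

Variables (q : nat) (T : Type) (D : T -> Prop) (sat : (nat -> nat) -> T -> Prop).
Variable supp : T -> nat.
Hypothesis sat_local :
  forall v v' t, (forall n, n < supp t -> v n = v' n) -> sat v t -> sat v' t.
Hypothesis finitely_sat : forall l, (forall t, In t l -> D t) ->
  exists2 v, bounded q v & forall t, In t l -> sat v t.

Lemma merge_witnesses (Q : nat -> list T -> Prop) m :
  (forall k l l', incl l l' -> Q k l -> Q k l') ->
  (forall k, k < m -> exists2 l, (forall t, In t l -> D t) & Q k l) ->
  exists2 L, (forall t, In t L -> D t) & forall k, k < m -> Q k L.
Proof.
move=> hQ; elim: m => [|m IH] h; first by exists nil.
have [L hL hLQ] := IH (fun k hk => h k (ltnW hk)).
have [l hl hlQ] := h m (ltnSn m).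
exists (L ++ l) => [t ht|k]; first by case: (in_app_or _ _ _ ht) => [/hL|/hl].
rewrite ltnS leq_eqVlt => /orP [/eqP ->|hk].
  exact: hQ (incl_appr _ (incl_refl _)) hlQ.
exact: hQ (incl_appl _ (incl_refl _)) (hLQ k hk).
Qed.

Definition extendable (p : nat -> nat) N := forall l, (forall t, In t l -> D t) ->
  exists2 v, bounded q v & (forall n, n < N -> v n = p n) /\ forall t, In t l -> sat v t.

Definition upd (p : nat -> nat) N k n := if n == N then k else p n.

Lemma extendable_step p N : extendable p N ->
  exists k, k <= q /\ extendable (upd p N k) N.+1.
Proof.
move=> hp; apply: NNPP => hnot.
pose Q k l := ~ exists2 v, bounded q v &
  (forall n, n < N.+1 -> v n = upd p N k n) /\ forall t, In t l -> sat v t.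
have [L hL hLQ] : exists2 L, (forall t, In t L -> D t) & forall k, k < q.+1 -> Q k L.
  apply: merge_witnesses => [k l l' hll' hQ [v hv [hpre hsat]]|k hk].
    by apply: hQ; exists v => //; split => // t /hll' /hsat.
  have hnext : ~ extendable (upd p N k) N.+1 by move=> h; apply: hnot; exists k.
  have [l hl] := not_all_ex_not _ _ hnext.
  by have [hlD hQ] := imply_to_and _ _ hl; exists l.
have [v hv [hpre hsat]] := hp L hL.
apply: (hLQ (v N) (hv N)); exists v => //; split => // n hn; rewrite /upd.
by case: eqP => [->//|hne]; apply: hpre; lia.
Qed.

Definition next_value p N : nat :=
  epsilon (inhabits 0) (fun k => k <= q /\ extendable (upd p N k) N.+1).

Fixpoint approx N : nat -> nat :=
  if N is M.+1 then upd (approx M) M (next_value (approx M) M) else fun _ => 0.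

Lemma approx_spec N : extendable (approx N) N /\ forall n, n < N -> approx N n <= q.
Proof.
elim: N => [|N [hext hle]].
  split=> // l /finitely_sat [v hv hsat]; by exists v.
have [] := epsilon_spec (inhabits 0) _ (extendable_step hext).
rewrite -/(next_value _ _) => hk hext'; split => // n; rewrite ltnS /= /upd.
by case: eqP => [//|hne hn]; apply: hle; lia.
Qed.

Lemma approx_stable N n : n < N -> approx N n = approx n.+1 n.
Proof.
elim: N => [//|N IH]; rewrite ltnS leq_eqVlt => /orP [/eqP ->//|hn].
by rewrite /= /upd; case: eqP => [hnN|_]; [lia|apply: IH].
Qed.

Theorem compactness : exists2 v, bounded q v & forall t, D t -> sat v t.
Proof.
exists (fun n => approx n.+1 n) => [n|t ht]; first exact: (proj2 (approx_spec n.+1)).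
have ht' : forall x, In x [:: t] -> D x by move=> x [<-|[]].
have [v _ [hpre hsat]] := proj1 (approx_spec (supp t)) [:: t] ht'.
apply: sat_local (hsat t (or_introl erefl)) => n hn.
by rewrite hpre // approx_stable.
Qed.

End Compactness.

Lemma Lmat_countermodel q j G phi : ~ Lmat q j G phi ->
  exists2 v, bounded q v & (forall x, G x -> j <= ev q v x) /\ ev q v phi < j.
Proof.
move=> h; apply: NNPP => hn; apply: h => v hv hG.
by case: leqP => // hlt; case: hn; exists v.
Qed.

Lemma Lmat_finitary q j : finitary (Lmat q j).
Proof.
move=> G phi h; apply: NNPP => hfin.
(* A constraint [(x, b)] asks that [x] be designated exactly when [b]. *)
pose D (t : form * bool) := if t.2 then G t.1 else t.1 = phi.
pose sat v (t : form * bool) := (j <= ev q v t.1) = t.2.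
have [v hv hsat] : exists2 v, bounded q v & forall t, D t -> sat v t.
  apply: (@compactness q _ D sat (fun t => (maxvar t.1).+1)).
    by move=> v v' t hvv'; rewrite /sat (@ev_local q v v').
  move=> l hl; pose l' := List.map fst (List.filter snd l).
  have hl' : forall x, In x l' -> G x.
    move=> x /in_map_iff [[y b] [<- /filter_In [/hl hy /= hb]]].
    by rewrite /D /= hb in hy.
  have [|v hv [hsat hphi]] := @Lmat_countermodel q j (setOf l') phi.
    by move=> hl'phi; apply: hfin; exists l'.
  exists v => // -[x []] hx; rewrite /sat /=.
    apply: hsat; apply/in_map_iff; exists (x, true); split => //.
    exact/filter_In.
  by have := hl _ hx; rewrite /D /= => ->; rewrite leqNgt hphi.
have := h v hv (fun x hx => hsat (x, true) hx).
by rewrite (hsat (phi, false)).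
Qed.

Lemma Lbar_countermodel q j G phi : ~ Lbar q j G phi ->
  exists v w, [/\ bounded q v, bounded 1 w,
    forall x, G x -> j <= ev q v x /\ 1 <= ev 1 w x &
    ~ (j <= ev q v phi /\ 1 <= ev 1 w phi)].
Proof.
move=> h; apply: NNPP => hn; apply: h => v w hv hw hG.
by apply: NNPP => hphi; apply: hn; exists v, w.
Qed.

Lemma Lbar_of_CPL_bot q j G phi : CPL G bot -> Lbar q j G phi.
Proof.
move=> h v w hv hw hG; exfalso.
by have := h w hw (fun x hx => proj2 (hG x hx)); rewrite ev_bot.
Qed.

Lemma Lbar_split q j G phi : Lbar q j G phi -> CPL G bot \/ Lmat q j G phi.
Proof.
move=> h; case: (classic (CPL G bot)) => [|hbot]; [by left|right].
have [w hw [hG hw0]] := Lmat_countermodel hbot.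
by move=> v hv hGv; apply: (proj1 (h v w hv hw _)) => x hx; split; [apply: hGv|apply: hG].
Qed.

Lemma Lbar_finitary q j : 0 < j <= q -> finitary (Lbar q j).
Proof.
move=> hj G phi /Lbar_split [/Lmat_finitary [l [hl hbot]]|/Lmat_finitary [l [hl hm]]].
  by exists l; split => //; apply: Lbar_of_CPL_bot.
by exists l; split => //; apply: Lmat_sub_Lbar.
Qed.

Definition booleanity q (x : form) := exists n, x = rule_concl q (Var n).

Lemma Lmat_booleanity q j G phi : 0 < j <= q -> CPL G phi ->
  Lmat q j (fun x => G x \/ booleanity q x) phi.
Proof.
move=> hj h v hv hG.
have hbool f : ev q v f = q * ev 1 (to_bool q v) f.
  apply: ev_to_bool => n _; rewrite -(rule_concl_designated (Var n) hv hj).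
  by apply: hG; right; exists n.
rewrite hbool; suff : 1 <= ev 1 (to_bool q v) phi by nia.
apply: h (bounded_to_bool q v) _ => x hx.
by have := hG x (or_introl hx); rewrite hbool; nia.
Qed.

Lemma Lbar_booleanity q j G phi : 0 < j <= q -> CPL G phi ->
  Lbar q j (fun x => G x \/ booleanity q x) phi.
Proof.
move=> hj h v w hv hw hG; split.
  by apply: (Lmat_booleanity hj h hv) => x /hG [].
by apply: h => // x hx; have [] := hG x (or_introl hx).
Qed.

Lemma cons_booleanity (C L : cons_rel) q G phi : is_cons C -> cons_sub L C ->
  (forall n, C G (rule_concl q (Var n))) ->
  L (fun x => G x \/ booleanity q x) phi -> C G phi.
Proof.
move=> hC hsub hB /hsub; apply: cons_trans => // x [hx|[n ->]] //.
exact: (proj1 hC).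
Qed.

Fixpoint maxvar_list (l : list form) : nat :=
  if l is f :: l then maxn (maxvar f) (maxvar_list l) else 0.

Lemma maxvar_list_ge f l : In f l -> maxvar f <= maxvar_list l.
Proof. by elim: l => [//|g l IH] /= [->|/IH]; lia. Qed.

Lemma CPL_bot_nonbool q j v l : 0 < j -> bounded q v -> CPL (setOf l) bot ->
  (forall x, In x l -> j <= ev q v x) -> exists2 n, n <= maxvar_list l & ~~ is_bool q (v n).
Proof.
move=> hj hv hbot hl; apply: NNPP => hnb.
have hb n : n <= maxvar_list l -> is_bool q (v n).
  by move=> hn; apply: NNPP => /negP hn'; apply: hnb; exists n.
suff : 1 <= ev 1 (to_bool q v) bot by rewrite ev_bot //; exact: bounded_to_bool.
apply: hbot (bounded_to_bool q v) _ => x hx.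
have := hl x hx; rewrite ev_to_bool; first by nia.
by move=> n hn; apply: hb; have := maxvar_list_ge hx; lia.
Qed.

Definition some_nonbool N :=
  bigvee (List.map (fun n => wedge (Var n) (Neg (Var n))) (List.seq 0 N.+1)).

Lemma is_bool_some_nonbool q v N n : bounded q v -> n <= N -> ~~ is_bool q (v n) ->
  is_bool q (ev q v (some_nonbool N)) = false.
Proof.
move=> hv hn; rewrite /is_bool; have := hv n; case: eqP; case: eqP => // hq h0 hvn _.
have hlo : minn (v n) (q - v n) <= ev q v (some_nonbool N).
  have -> : minn (v n) (q - v n) = ev q v (wedge (Var n) (Neg (Var n))) by rewrite ev_wedge.
  apply: bigvee_ge => //.
  by apply/in_map_iff; exists n; split => //; apply/in_seq; lia.
have hhi : ev q v (some_nonbool N) <= q.-1.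
  apply: bigvee_le => // x /in_map_iff [m [<- _]].
  by rewrite ev_wedge //=; have := hv m; lia.
by case: eqP; case: eqP; lia.
Qed.

Lemma Lbar_least q j C : 0 < j <= q -> is_cons C -> cons_sub (Lmat q j) C ->
  validates_rule q j C -> cons_sub (Lbar q j) C.
Proof.
move=> hj hC hsub hrule G phi /Lbar_split [/Lmat_finitary [l [hlG hbot]]|/hsub //].
apply: (cons_booleanity hC hsub) => [n|]; last first.
  apply: Lmat_booleanity => // w hw hGw; exfalso.
  by have := hbot w hw (fun x hx => hGw x (hlG x hx)); rewrite ev_bot.
apply: (cons_trans hC (D := setOf [:: rule_prem j (some_nonbool (maxvar_list l))])).
  move=> x [<-|[]]; apply: hsub => v hv hGv.
  have [m hm hmb] := CPL_bot_nonbool (proj1 (andP hj)) hv hbot (fun x hx => hGv x (hlG x hx)).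
  by rewrite rule_prem_designated // (is_bool_some_nonbool hv hm hmb).
exact: hrule.
Qed.

Lemma Lbar_maximal_CPL q j prems concl : prime q -> 0 < j <= q ->
  CPL (setOf prems) concl -> ~ Lbar q j (setOf prems) concl ->
  cons_sub CPL (least_ext (Lbar q j) prems concl).
Proof.
move=> pq hj hcpl /Lbar_countermodel [v [w [hv hw hprems hconcl]]] G phi hG C hC hsub hrule.
have hvc : ev q v concl < j.
  rewrite ltnNge; apply/negP => hvj; apply: hconcl; split => //.
  by apply: hcpl => // x /hprems [].
apply: (cons_booleanity hC hsub _ (Lbar_booleanity hj hG)) => n.
pose s := encode q v w (Var n).
apply: (cons_trans hC (D := setOf [:: subst s concl])).
  move=> _ [<-|[]]; apply: (cons_rule_instance hC hsub hrule) => x /hprems [hx1 hx2].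
  move=> v' w' hv' hw' _; rewrite ev1_encode // ev_encode //; split => //.
  by case: ifP => _; nia.
apply: hsub => v' w' hv' hw' /(_ _ (or_introl erefl)) [h1 _].
rewrite ev1_rule_concl ?rule_concl_designated //; last exact: prime_gt0.
by split => //; move: h1; rewrite ev_encode //; case: ifP => // _; lia.
Qed.

Lemma Lmat_maximal_Lbar q j prems concl : prime q -> 0 < j <= q ->
  ~ Lmat q j (setOf prems) concl -> cons_sub (Lbar q j) (least_ext (Lmat q j) prems concl).
Proof.
move=> pq hj /Lmat_countermodel [v hv [hprems hvc]] G phi hG C hC hsub hrule.
apply: (Lbar_least hj hC hsub) hG => chi psi.
pose s := encode q v (fun _ => 0) chi.
apply: (cons_trans hC (D := setOf [:: rule_prem j chi; subst s concl])).
  move=> _ [<-|[<-|[]]]; first by apply: (proj1 hC); left.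
  apply: (cons_rule_instance hC hsub hrule) => x /hprems hx v' hv' /(_ _ (or_introl erefl)).
  by rewrite rule_prem_designated // ev_encode // => /negbTE ->.
apply: hsub => v' hv' hD; exfalso.
move: (hD _ (or_introl erefl)) (hD _ (or_intror (or_introl erefl))).
by rewrite rule_prem_designated // ev_encode // => /negbTE ->; lia.
Qed.

Lemma strongly_maximal_intro L1 L2 : is_cons L2 -> structural L2 ->
  cons_sub L1 L2 -> ~ cons_sub L2 L1 ->
  (forall prems concl, L2 (setOf prems) concl -> ~ L1 (setOf prems) concl ->
     cons_sub L2 (least_ext L1 prems concl)) ->
  strongly_maximal L1 L2.
Proof.
move=> hC hs h12 h21 hmax; split => // prems concl h2 h1 G phi; split; last exact: hmax.
apply=> // s; apply: (proj1 (proj2 hC) (Defs.image s (setOf prems))); last exact: hs.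
by move=> _ [y [hy ->]]; apply: in_map.
Qed.

Theorem theorem5p7 (q j : nat) (hq : prime q) (hq1 : 1 < q) (hj0 : 0 < j) (hjq : j <= q) :
  (strongly_maximal (Lbar q j) CPL /\
   (is_cons (Lbar q j) /\ structural (Lbar q j) /\ finitary (Lbar q j) /\
    cons_sub (Lmat q j) (Lbar q j) /\ validates_rule q j (Lbar q j) /\
    forall C : cons_rel, is_cons C -> structural C -> finitary C ->
      cons_sub (Lmat q j) C -> validates_rule q j C -> cons_sub (Lbar q j) C)) /\
  strongly_maximal (Lmat q j) (Lbar q j).
Proof.
have hj : 0 < j <= q by rewrite hj0 hjq.
split; [split|].
- apply: strongly_maximal_intro; first exact: Lmat_cons.
  + exact: Lmat_structural.
  + exact: Lbar_sub_CPL.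
  + exact: CPL_not_sub_Lbar.
  + by move=> prems concl; apply: Lbar_maximal_CPL.
- split; first exact: Lbar_cons.
  split; first exact: Lbar_structural.
  split; first exact: Lbar_finitary.
  split; first exact: Lmat_sub_Lbar.
  split; first exact: Lbar_validates_rule.
  by move=> C hC _ _; apply: Lbar_least.
- apply: strongly_maximal_intro; first exact: Lbar_cons.
  + exact: Lbar_structural.
  + exact: Lmat_sub_Lbar.
  + exact: Lbar_not_sub_Lmat.
  + by move=> prems concl _; apply: Lmat_maximal_Lbar.
Qed.
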